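(* Let $n\ge 1$, $m$, $\hbar\neq 0$ be constants and let $\omega^0,\omega^1\in(-\pi/2,\pi/2]$. Let $a_\ast$ be a nowhere vanishing, differentiable complex-valued function of $t\in\mathbb{R}$ such that $\theta:=\arg a_\ast(t)$ is a constant independent of $t$. Let $b_0\in\mathbb{C}\setminus\{0\}$ and define $w_\ast(t):=b_0\big(a_\ast(0)/a_\ast(t)\big)^{n/2}$. Put $C_0:=2me^{i\omega^0}/\hbar$ and assume $C_0\in\mathbb{R}$. Let $V_0,V_0'$ be functions on $\mathbb{C}$ with $\mathrm{Im}\{\bar z\,V_0'(z)\}=0$ for all $z\in\mathbb{C}$. Let $u_\ast=u_\ast(t,x)$, $(t,x)\in\mathbb{R}\times\mathbb{R}^n$, be a complex-valued solution (for a fixed choice of sign $\pm$) of $$\pm i\,C_0\,\partial_t u_\ast+\frac{e^{2i\omega^0}}{e^{2i(\theta+\omega^1)}}\left(\frac{1}{|a_\ast|^2}\Delta_x u_\ast-\frac{1}{w_\ast}V_0'(u_\ast w_\ast)\right)=0,$$ where $\Delta_x=\sum_{j=1}^n\partial^2/(\partial x^j)^2$, which is sufficiently smooth and decays at spatial infinity so that all integrals below are finite and integrals over $\mathbb{R}^n$ of spatial divergences vanish. (1) (Charge estimate.) For every $t$, $$\pm\int_{\mathbb{R}^n}e_C^0(t,x)\,dx+\int_0^t\int_{\mathbb{R}^n}e_C^{n+1}(s,x)\,dx\,ds=\pm\int_{\mathbb{R}^n}e_C^0(0,x)\,dx,$$ where $e_C^0:=C_0|u_\ast|^2$ and $$e_C^{n+1}:=2\,\mathrm{Im}\Big(\frac{e^{2i(\theta+\omega^1)}}{e^{2i\omega^0}}\Big)\left(\frac{1}{|a_\ast|^2}\sum_{j=1}^n|\partial_{x^j}u_\ast|^2+\frac{1}{|w_\ast|^2}\overline{u_\ast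 w_\ast}\,V_0'(u_\ast w_\ast)\right).$$ (2) (Energy estimate.) Assume in addition that $\partial_t V_0(\psi)=\mathrm{Re}\,\big(\partial_t\overline{\psi}\,V_0'(\psi)\big)$ for every function $\psi=\psi(t,x)$. Then for every $t$, $$\int_{\mathbb{R}^n}e_E^0(t,x)\,dx+\int_0^t\int_{\mathbb{R}^n}e_E^{n+1}(s,x)\,dx\,ds=\int_{\mathbb{R}^n}e_E^0(0,x)\,dx,$$ where $$e_E^0:=\sum_{j=1}^n|\partial_{x^j}u_\ast|^2+\frac{2|a_\ast|^2}{|w_\ast|^2}V_0(u_\ast w_\ast)$$ and $$e_E^{n+1}:=\pm2C_0\,\mathrm{Im}\Big(\frac{e^{2i(\theta+\omega^1)}}{e^{2i\omega^0}}\Big)|a_\ast|^2|\partial_t u_\ast|^2+\frac{n}{2|w_\ast|^2}\big(\partial_t|a_\ast|^2\big)\left(\overline{u_\ast w_\ast}\,V_0'(u_\ast w_\ast)-\frac{2(n+2)}{n}V_0(u_\ast w_\ast)\right).$$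
   Context: Here $a_\ast$ plays the role of a (complex) scale-function of space and $w_\ast$ is a weight function built from it; any fixed branch of the power $(\cdot)^{n/2}$ may be used in the definition of $w_\ast$ (only $|w_\ast|^2=|b_0|^2|a_\ast(0)|^n/|a_\ast(t)|^n$ enters the identities beyond the equation itself). The sign $\pm$ is the same throughout each statement. *)

From HB Require Import structures.
From mathcomp Require Import all_boot all_order all_algebra.
From mathcomp Require Import all_classical all_reals all_analysis.
From mathcomp.real_closed Require Import complex.
Import Order.TTheory GRing.Theory Num.Theory.
Import numFieldNormedType.Exports.

Set Implicit Arguments.
Unset Strict Implicit.
Unset Printing Implicit Defensive.

Local Open Scope classical_set_scope.
Local Open Scope ring_scope.

Section Defs.
Context {R : realType}.

Definition cexpi (a : R) : R[i] := Complex (cos a) (sin a).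
Definition RtoC (x : R) : R[i] := Complex x 0.
Definition cabs2 (z : R[i]) : R := complex.Re z ^+ 2 + complex.Im z ^+ 2.
Definition cabs (z : R[i]) : R := Num.sqrt (cabs2 z).

Definition cderivable (f : R -> R[i]) (r : R) : Prop :=
  derivable (fun s => complex.Re (f s)) r 1 /\ derivable (fun s => complex.Im (f s)) r 1.

Definition cderive (f : R -> R[i]) (r : R) : R[i] :=
  Complex (derive1 (fun s => complex.Re (f s)) r) (derive1 (fun s => complex.Im (f s)) r).

Definition ej {n : nat} (j : 'I_n) : 'rV[R]_n := delta_mx 0 j.

Definition dt {n : nat} (u : R -> 'rV[R]_n -> R[i]) : R -> 'rV[R]_n -> R[i] :=
  fun t x => cderive (fun s => u s x) t.

Definition dx {n : nat} (j : 'I_n) (u : R -> 'rV[R]_n -> R[i]) :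
    R -> 'rV[R]_n -> R[i] :=
  fun t x => cderive (fun y => u t (x + y *: ej j)) 0.

Definition lap {n : nat} (u : R -> 'rV[R]_n -> R[i]) : R -> 'rV[R]_n -> R[i] :=
  fun t x => \sum_(j < n) dx j (dx j u) t x.

Definition rcons1 {n : nat} (y : R) (z : 'rV[R]_n) : 'rV[R]_n.+1 :=
  row_mx (const_mx y : 'rV[R]_1) z.

Fixpoint intRn (n : nat) : ('rV[R]_n -> R) -> R :=
  match n return ('rV[R]_n -> R) -> R with
  | 0 => fun f => f 0
  | n'.+1 => fun f =>
      Rintegral (@lebesgue_measure R) setT (fun y => intRn (fun z => f (rcons1 y z)))
  end.

Fixpoint integrableRn (n : nat) : ('rV[R]_n -> R) -> Prop :=
  match n return ('rV[R]_n -> R) -> Prop with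
  | 0 => fun f => True
  | n'.+1 => fun f =>
      (forall y, integrableRn (fun z => f (rcons1 y z))) /\
      (@lebesgue_measure R).-integrable setT
         (EFin \o (fun y => intRn (fun z => f (rcons1 y z)))) /\
      (@lebesgue_measure R).-integrable setT
         (EFin \o (fun y => intRn (fun z => `|f (rcons1 y z)|)))
  end.

Definition cintRn {n : nat} (f : 'rV[R]_n -> R[i]) : R[i] :=
  Complex (intRn (fun x => complex.Re (f x))) (intRn (fun x => complex.Im (f x))).

Definition cintegrableRn {n : nat} (f : 'rV[R]_n -> R[i]) : Prop :=
  integrableRn (fun x => complex.Re (f x)) /\ integrableRn (fun x => complex.Im (f x)).

Definition int0 (g : R -> R) (t : R) : R :=
  if (0 <= t) then Rintegral (@lebesgue_measure R) `[0, t] g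
  else - Rintegral (@lebesgue_measure R) `[t, 0] g.

Definition cint0 (g : R -> R[i]) (t : R) : R[i] :=
  Complex (int0 (fun s => complex.Re (g s)) t) (int0 (fun s => complex.Im (g s)) t).


Definition iC : R[i] := Complex 0 1.

(* w_*(t) = b0 (a_*(0)/a_*(t))^{n/2}, for a fixed branch  pw  of z |-> z^{n/2} *)
Definition wstar (b0 : R[i]) (pw : R[i] -> R[i]) (a : R -> R[i]) (t : R) : R[i] :=
  b0 * pw (a 0 / a t).

Definition C0of (m hbar om0 : R) : R[i] := RtoC (2 * m) * cexpi om0 / RtoC hbar.

Definition phase_ratio (theta om0 om1 : R) : R[i] :=
  cexpi (2 * (theta + om1)) / cexpi (2 * om0).

(* Regularity / decay of a balance law  d_t e0 + div F + e1 = 0 :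
   all spatial integrals are finite, differentiation of the spatial integral
   of e0 in time under the integral sign, vanishing of the spatial integrals
   of the spatial divergences d_{x^j} F_j, and continuity in time of the
   spatial integral of e1 (so that the time integral makes sense). *)
Definition regular_decay {n : nat} (e0 e1 : R -> 'rV[R]_n -> R[i])
    (F : 'I_n -> R -> 'rV[R]_n -> R[i]) : Prop :=
  (forall t,
    cintegrableRn (e0 t) /\
    cintegrableRn (fun x => cderive (fun r => e0 r x) t) /\
    cintegrableRn (e1 t) /\
    cderivable (fun r => cintRn (e0 r)) t /\
    cderive (fun r => cintRn (e0 r)) t
      = cintRn (fun x => cderive (fun r => e0 r x) t) /\
    (forall j, cintegrableRn (dx j (F j) t) /\ cintRn (dx j (F j) t) = 0)) /\
  continuous (fun r => complex.Re (cintRn (e1 r))) /\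
  continuous (fun r => complex.Im (cintRn (e1 r))).

End Defs.

(* Both estimates are integrated local balance laws.  Multiplying the equation
   by conj u (charge), resp. by conj (d_t u) (energy), and taking the imaginary,
   resp. real, part gives pointwise identities
     s d_t e^0 + e^{n+1} = Re (kappa(t) sum_j d_{x^j} F_j)      (s = 1 for the energy)
   with fluxes F_j = conj u d_j u, resp. conj (d_t u) d_j u.  Integrating over
   R^n kills the divergence, and the fundamental theorem of calculus in t gives
   the identity.  The nonlinear terms are real because Im (conj z V0'(z)) = 0.
   In the energy case the time dependence of the weight enters through
   w' = -(n/4) (|a|^2)'/|a|^2 w, a consequence of w^2 a^n being constant and of
   the argument of a being constant; this is what produces the second term of
   e_E^{n+1}. *)
From HB Require Import structures.
From mathcomp Require Import all_boot all_order all_algebra.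
From mathcomp Require Import all_classical all_reals all_analysis.
From mathcomp.real_closed Require Import complex.
From mathcomp Require Import ring lra.
Import Order.TTheory GRing.Theory Num.Theory.
Import numFieldNormedType.Exports.
Local Open Scope classical_set_scope.
Local Open Scope ring_scope.

Section ComplexArithmetic.
Context {R : realType}.
Implicit Types (x y : R) (z v : R[i]).

Lemma RtoCE x : RtoC x = (x%:C)%C.
Proof. by []. Qed.

Lemma RtoCD x y : RtoC (x + y) = RtoC x + RtoC y.
Proof. by rewrite !RtoCE rmorphD. Qed.

Lemma RtoCN x : RtoC (- x) = - RtoC x.
Proof. by rewrite !RtoCE rmorphN. Qed.

Lemma RtoCM x y : RtoC (x * y) = RtoC x * RtoC y.
Proof. by rewrite !RtoCE rmorphM. Qed.

Lemma RtoCV x : RtoC x^-1 = (RtoC x)^-1.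
Proof. by rewrite !RtoCE fmorphV. Qed.

Lemma RtoC_nat (k : nat) : RtoC (k%:R : R) = k%:R.
Proof. by rewrite RtoCE rmorph_nat. Qed.

Lemma RtoC_sum (k : nat) (f : 'I_k -> R) :
  RtoC (\sum_(j < k) f j) = \sum_(j < k) RtoC (f j).
Proof. by rewrite RtoCE rmorph_sum. Qed.

Lemma RtoC_Re {z} : complex.Im z = 0 -> RtoC (complex.Re z) = z.
Proof. by case: z => a b /= ->. Qed.

Lemma Re_add z v : complex.Re (z + v) = complex.Re z + complex.Re v.
Proof. by case: z; case: v. Qed.

Lemma Im_add z v : complex.Im (z + v) = complex.Im z + complex.Im v.
Proof. by case: z; case: v. Qed.

Lemma Re_sum (k : nat) (f : 'I_k -> R[i]) :
  complex.Re (\sum_(j < k) f j) = \sum_(j < k) complex.Re (f j).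
Proof. exact: raddf_sum. Qed.

Lemma Re_mul z v :
  complex.Re (z * v) = complex.Re z * complex.Re v - complex.Im z * complex.Im v.
Proof. by case: z; case: v. Qed.

Lemma Im_mul z v :
  complex.Im (z * v) = complex.Re z * complex.Im v + complex.Im z * complex.Re v.
Proof. by case: z; case: v. Qed.

Lemma Re_RtoCM x z : complex.Re (RtoC x * z) = x * complex.Re z.
Proof. by case: z => a b /=; rewrite mul0r subr0. Qed.

Lemma Im_RtoCM x z : complex.Im (RtoC x * z) = x * complex.Im z.
Proof. by case: z => a b /=; rewrite mul0r addr0. Qed.

Lemma conjcM z v : conjc (z * v) = conjc z * conjc v.
Proof. by case: z; case: v => ? ? ? ? /=; congr Complex; ring. Qed.

Lemma conjc_RtoC x : conjc (RtoC x) = RtoC x.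
Proof. by rewrite RtoCE conjc_real. Qed.

Lemma Re_conjMC z v : complex.Re (conjc z * v) = complex.Re (conjc v * z).
Proof. by case: z; case: v => ? ? ? ? /=; ring. Qed.

Lemma cabs2_conj z : z * conjc z = RtoC (cabs2 z).
Proof. by case: z => a b; rewrite /cabs2 /RtoC /=; congr Complex; ring. Qed.

Lemma cabs2_eq0 z : (cabs2 z == 0) = (z == 0).
Proof.
apply/eqP/eqP=> [z0|->]; last by rewrite /cabs2 /= expr0n addr0.
have : z * conjc z == 0 by rewrite cabs2_conj z0.
by rewrite mulf_eq0 conjc_eq0 orbb => /eqP.
Qed.

Lemma cexpi_conj x : cexpi x * conjc (cexpi x) = 1.
Proof. by rewrite cabs2_conj /cabs2 /= cos2Dsin2. Qed.

Lemma cexpi_neq0 x : cexpi x != 0.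
Proof.
by apply/eqP => e; move: (cexpi_conj x); rewrite e mul0r => /eqP; rewrite eq_sym oner_eq0.
Qed.

Lemma cexpiV x : (cexpi x)^-1 = conjc (cexpi x).
Proof. by apply: (mulfI (cexpi_neq0 x)); rewrite cexpi_conj mulfV ?cexpi_neq0. Qed.

End ComplexArithmetic.

Section ComplexDerivative.
Context {R : realType}.
Implicit Types (F G : R -> R[i]) (t : R).

Definition is_cderive F t (dF : R[i]) : Prop :=
  is_derive t 1 (fun r => complex.Re (F r)) (complex.Re dF) /\
  is_derive t 1 (fun r => complex.Im (F r)) (complex.Im dF).

Lemma cderivableP {F t} : cderivable F t -> is_cderive F t (cderive F t).
Proof. by case=> /derivableP dRe /derivableP dIm; split; rewrite /= derive1E. Qed.

Lemma is_cderive_derivable {F t dF} : is_cderive F t dF -> cderivable F t.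
Proof. by case=> [[dRe _] [dIm _]]. Qed.

Lemma is_cderiveE {F t dF} : is_cderive F t dF -> cderive F t = dF.
Proof. by case: dF => a b [dRe dIm]; rewrite /cderive !derive1E !derive_val. Qed.

Lemma is_cderive_RtoC {f : R -> R} {t df} :
  is_derive t 1 f df -> is_cderive (fun r => RtoC (f r)) t (RtoC df).
Proof. by move=> df_; split => //=; apply: is_derive_cst. Qed.

Lemma is_cderive_cst (c : R[i]) t : is_cderive (fun _ => c) t 0.
Proof. by split; apply: is_derive_cst. Qed.

Lemma is_cderiveM {F G t dF dG} : is_cderive F t dF -> is_cderive G t dG ->
  is_cderive (fun r => F r * G r) t (dF * G t + F t * dG).
Proof.
move=> [F1 F2] [G1 G2]; split.
- rewrite (_ : (fun r => complex.Re (F r * G r)) = (fun r => complex.Re (F r) * complex.Re (G r)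
     - complex.Im (F r) * complex.Im (G r))); last by apply: funext => r; rewrite Re_mul.
  apply: is_derive_eq; rewrite /GRing.scale /=.
  by clear F1 F2 G1 G2; case: (F t) (G t) dF dG => [? ?] [? ?] [? ?] [? ?] /=; ring.
- rewrite (_ : (fun r => complex.Im (F r * G r)) = (fun r => complex.Re (F r) * complex.Im (G r)
     + complex.Im (F r) * complex.Re (G r))); last by apply: funext => r; rewrite Im_mul.
  apply: is_derive_eq; rewrite /GRing.scale /=.
  by clear F1 F2 G1 G2; case: (F t) (G t) dF dG => [? ?] [? ?] [? ?] [? ?] /=; ring.
Qed.

Lemma is_cderive_conj {F t dF} : is_cderive F t dF ->
  is_cderive (fun r => conjc (F r)) t (conjc dF).
Proof.
case=> dRe dIm; split.
- rewrite (_ : (fun r => complex.Re (conjc (F r))) = (fun r => complex.Re (F r))); last first.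
    by apply: funext => r; case: (F r).
  by case: dF dRe dIm.
- rewrite (_ : (fun r => complex.Im (conjc (F r))) = (fun r => - complex.Im (F r))); last first.
    by apply: funext => r; case: (F r).
  by apply: is_derive_eq; case: dF dRe dIm.
Qed.

Lemma is_cderiveX {F t dF} (k : nat) : is_cderive F t dF ->
  is_cderive (fun r => F r ^+ k) t (k%:R * F t ^+ k.-1 * dF).
Proof.
move=> dF_; elim: k => [|k IH].
  by rewrite !mul0r; under eq_fun do rewrite expr0; apply: is_cderive_cst.
under eq_fun do rewrite exprSr.
have := is_cderiveM IH dF_; congr is_cderive.
case: k {IH} => [|k]; first by rewrite !expr0 !mul0r add0r mulr1 mul1r.
by rewrite /= !exprS -natr1; ring.
Qed.

Lemma is_derive_cabs2 {F t dF} : is_cderive F t dF ->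
  is_derive t 1 (fun r => cabs2 (F r)) (2 * complex.Re (conjc (F t) * dF)).
Proof.
case=> dRe dIm; rewrite /cabs2; apply: is_derive_eq.
by rewrite /GRing.scale /=; clear dRe dIm; case: (F t) dF => [? ?] [? ?] /=; ring.
Qed.

End ComplexDerivative.

Section IteratedIntegral.
Context {R : realType}.
Local Notation mu := (@lebesgue_measure R).

(* Unlike [integrableRn], which also asks for the integrability of the slices
   of |f|, this notion is stable under linear combinations. *)
Fixpoint slice_integrable {n : nat} : ('rV[R]_n -> R) -> Prop :=
  match n return ('rV[R]_n -> R) -> Prop with
  | 0 => fun _ => True
  | n'.+1 => fun f =>
      (forall y, slice_integrable (fun z => f (rcons1 y z))) /\
      mu.-integrable setT (EFin \o (fun y => intRn (fun z => f (rcons1 y z))))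
  end.

Lemma integrableRn_slice (n : nat) (f : 'rV[R]_n -> R) :
  integrableRn f -> slice_integrable f.
Proof. by elim: n f => [//|n IH] f /= [hf [hint _]]; split=> // y; apply: IH. Qed.

Lemma intRn_comb {n : nat} {f g : 'rV[R]_n -> R} (a b : R) :
  slice_integrable f -> slice_integrable g ->
  slice_integrable (fun x => a * f x + b * g x) /\
  intRn (fun x => a * f x + b * g x) = a * intRn f + b * intRn g.
Proof.
elim: n f g => [//|n IH] f g /= [sf intf] [sg intg].
have slices y := IH _ _ (sf y) (sg y).
have -> : (fun y => intRn (fun z => a * f (rcons1 y z) + b * g (rcons1 y z)))
   = (fun y => a * intRn (fun z => f (rcons1 y z)) + b * intRn (fun z => g (rcons1 y z))).
  by apply: funext => y; rewrite (slices y).2.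
have intaf : mu.-integrable setT (EFin \o (fun y => a * intRn (fun z => f (rcons1 y z)))).
  by apply: eq_integrable (integrableZl measurableT a intf) => // y _.
have intbg : mu.-integrable setT (EFin \o (fun y => b * intRn (fun z => g (rcons1 y z)))).
  by apply: eq_integrable (integrableZl measurableT b intg) => // y _.
split; [split|].
- by move=> y; apply: (slices y).1.
- by apply: eq_integrable (integrableD measurableT intaf intbg) => // y _.
- by rewrite RintegralD // !RintegralZl.
Qed.

Lemma intRn0 (n : nat) :
  slice_integrable (fun _ : 'rV[R]_n => 0) /\ intRn (fun _ : 'rV[R]_n => 0) = 0.
Proof.
elim: n => [//|n [s0 int0]] /=; rewrite int0; split; [split=> //|].
- exact: integrable0.
- by rewrite Rintegral_cst // mul0r.
Qed.

Lemma intRn_sum {n k : nat} {F : 'I_k -> 'rV[R]_n -> R} :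
  (forall j, slice_integrable (F j)) ->
  slice_integrable (fun x => \sum_(j < k) F j x) /\
  intRn (fun x => \sum_(j < k) F j x) = \sum_(j < k) intRn (F j).
Proof.
elim: k F => [|k IH] F sF.
  by rewrite big_ord0; under eq_fun do rewrite big_ord0; apply: intRn0.
have [sS intS] := IH (fun j => F (widen_ord (leqnSn k) j)) (fun j => sF _).
have -> : (fun x => \sum_(j < k.+1) F j x) = (fun x =>
    1 * \sum_(j < k) F (widen_ord (leqnSn k) j) x + 1 * F ord_max x).
  by apply: funext => x; rewrite big_ord_recr !mul1r.
have [sC intC] := intRn_comb 1 1 sS (sF ord_max).
by rewrite intC intS big_ord_recr !mul1r.
Qed.

Lemma intRn_divergence {n : nat} (F : 'I_n -> R -> 'rV[R]_n -> R[i]) t (kappa : R[i]) :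
  (forall j, cintegrableRn (dx j (F j) t) /\ cintRn (dx j (F j) t) = 0) ->
  intRn (fun x => complex.Re (kappa * \sum_(j < n) dx j (F j) t x)) = 0.
Proof.
move=> divF.
have -> : (fun x => complex.Re (kappa * \sum_(j < n) dx j (F j) t x)) =
    (fun x => \sum_(j < n) (complex.Re kappa * complex.Re (dx j (F j) t x)
                            + (- complex.Im kappa) * complex.Im (dx j (F j) t x))).
  by apply: funext => x; rewrite Re_mul !raddf_sum big_split -!mulr_sumr mulNr.
have slices j : slice_integrable (fun x => complex.Re (dx j (F j) t x)) /\
                slice_integrable (fun x => complex.Im (dx j (F j) t x)).
  by have [[iRe iIm] _] := divF j; split; apply: integrableRn_slice.
have sF j := (intRn_comb (complex.Re kappa) (- complex.Im kappa)
                (slices j).1 (slices j).2).1.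
rewrite (intRn_sum sF).2; apply: big1 => j _.
have [[_ div0] [sRe sIm]] := (divF j, slices j).
have Re0 : intRn (fun x => complex.Re (dx j (F j) t x)) = 0 := congr1 (@complex.Re R) div0.
have Im0 : intRn (fun x => complex.Im (dx j (F j) t x)) = 0 := congr1 (@complex.Im R) div0.
by rewrite (intRn_comb _ _ sRe sIm).2 Re0 Im0 !mulr0 addr0.
Qed.

End IteratedIntegral.

Section BalanceLaw.
Context {R : realType}.
Local Notation mu := (@lebesgue_measure R).

Lemma Rintegral_itv_derive {Phi g : R -> R} {a b : R} : a < b -> continuous g ->
  (forall t : R, is_derive t 1 Phi (g t)) ->
  Rintegral mu `[a, b] g = Phi b - Phi a.
Proof.
move=> ab cg dPhi.
have derPhi t : derivable Phi t 1 by case: (dPhi t).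
have contPhi t : {for t, continuous Phi}.
  by apply/differentiable_continuous; rewrite -derivable1_diffP.
rewrite /Rintegral (@continuous_FTC2 _ g Phi _ _ ab (continuous_subspaceT cg)) //.
- split.
  + by move=> x _; apply: derPhi.
  + exact/cvg_at_right_filter/contPhi.
  + exact/cvg_at_left_filter/contPhi.
- by move=> x _; rewrite derive1E derive_val.
Qed.

Lemma int0_derive {Phi g : R -> R} : continuous g ->
  (forall t : R, is_derive t 1 Phi (g t)) -> forall t, int0 g t = Phi t - Phi 0.
Proof.
move=> cg dPhi t; rewrite /int0.
case: (ltgtP t 0) => [t0|t0|->].
- by rewrite (Rintegral_itv_derive t0 cg dPhi) opprB.
- by rewrite (Rintegral_itv_derive t0 cg dPhi).
- by rewrite set_itv1 Rintegral_set1 subrr.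
Qed.

Lemma conservation_law {n : nat} {E0 E1 N : R -> 'rV[R]_n -> R} {s : R} :
  (forall t, slice_integrable (fun x => derive1 (fun r => E0 r x) t)) ->
  (forall t, slice_integrable (E1 t)) ->
  (forall t : R, is_derive t 1 (fun r => intRn (E0 r))
                   (intRn (fun x => derive1 (fun r => E0 r x) t))) ->
  continuous (fun r => intRn (E1 r)) ->
  (forall t, intRn (N t) = 0) ->
  (forall t x, s * derive1 (fun r => E0 r x) t + E1 t x = N t x) ->
  forall t, s * intRn (E0 t) + int0 (fun r => intRn (E1 r)) t = s * intRn (E0 0).
Proof.
move=> sdE0 sE1 dE0 cE1 N0 local t.
have dPhi (r : R) : is_derive r 1 (fun r => - (s * intRn (E0 r))) (intRn (E1 r)).
  apply: is_derive_eq; rewrite /GRing.scale /=.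
  have [_ comb] := intRn_comb s 1 (sdE0 r) (sE1 r).
  have : s * intRn (fun x => derive1 (fun r => E0 r x) r) + 1 * intRn (E1 r) = 0.
    by rewrite -comb -(N0 r); congr intRn; apply: funext => x; rewrite mul1r local.
  by rewrite mul1r => /eqP; rewrite addr_eq0 => /eqP ->; rewrite opprK.
rewrite (int0_derive cE1 dPhi t); ring.
Qed.

Lemma balance_law {n : nat} {e0 e1 : R -> 'rV[R]_n -> R[i]}
    {F : 'I_n -> R -> 'rV[R]_n -> R[i]} {s : R} (kappa : R -> R[i]) :
  regular_decay e0 e1 F ->
  (forall t x, RtoC s * cderive (fun r => e0 r x) t + e1 t x
               = RtoC (complex.Re (kappa t * \sum_(j < n) dx j (F j) t x))) ->
  forall t, RtoC s * cintRn (e0 t) + cint0 (fun r => cintRn (e1 r)) t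
            = RtoC s * cintRn (e0 0).
Proof.
move=> [reg [cRe cIm]] local t.
have slices r : [/\ slice_integrable (fun x => complex.Re (cderive (fun r => e0 r x) r)),
    slice_integrable (fun x => complex.Im (cderive (fun r => e0 r x) r)),
    slice_integrable (fun x => complex.Re (e1 r x)) &
    slice_integrable (fun x => complex.Im (e1 r x))].
  by have [_ [[? ?] [[? ?] _]]] := reg r; split; apply: integrableRn_slice.
have dint r : is_cderive (fun r => cintRn (e0 r)) r
                         (cintRn (fun x => cderive (fun r => e0 r x) r)).
  by have [_ [_ [_ [d_int [<- _]]]]] := reg r; apply: cderivableP.
rewrite /cintRn /cint0 /RtoC /=; congr Complex; rewrite !mul0r ?subr0 ?addr0.
- apply: (conservation_law (E0 := fun r x => complex.Re (e0 r x))
    (N := fun r x => complex.Re (kappa r * \sum_(j < n) dx j (F j) r x))) => //.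
  + by move=> r; case: (slices r).
  + by move=> r; case: (slices r).
  + by move=> r; apply: (dint r).1.
  + by move=> r; have [_ [_ [_ [_ [_ divF]]]]] := reg r; apply: intRn_divergence.
  + by move=> r x; have := congr1 (@complex.Re R) (local r x); rewrite Re_add Re_RtoCM.
- apply: (conservation_law (E0 := fun r x => complex.Im (e0 r x))
    (E1 := fun r x => complex.Im (e1 r x)) (N := fun _ _ => 0)) => //.
  + by move=> r; case: (slices r).
  + by move=> r; case: (slices r).
  + by move=> r; apply: (dint r).2.
  + by move=> r; apply: (intRn0 n).2.
  + by move=> r x; have := congr1 (@complex.Im R) (local r x); rewrite Im_add Im_RtoCM.
Qed.

End BalanceLaw.

Section ScaleFunction.
Context {R : realType}.

Lemma cderive_const_arg {a : R -> R[i]} {e : R[i]} {t : R} :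
  e * conjc e = 1 -> (forall r, a r = RtoC (cabs (a r)) * e) -> cderivable a t ->
  cderive a t * conjc (a t) = RtoC (derive1 (fun r => cabs2 (a r)) t / 2).
Proof.
move=> he harg /cderivableP da.
have Im0 : complex.Im (cderive a t * conjc e) = 0.
  case: (is_cderiveM da (is_cderive_cst (conjc e) t)) => _; rewrite mulr0 addr0.
  rewrite (_ : (fun r => complex.Im (a r * conjc e)) = cst 0) => [[_ <-]|].
    by rewrite derive_cst.
  by apply: funext => r; rewrite {1}harg -mulrA he mulr1.
have -> : derive1 (fun r => cabs2 (a r)) t = 2 * complex.Re (cderive a t * conjc (a t)).
  by case: (is_derive_cabs2 da) => _; rewrite derive1E => ->; rewrite [conjc _ * _]mulrC.
rewrite [2 * _]mulrC mulfK ?pnatr_eq0 // RtoC_Re //.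
by rewrite [a t]harg conjcM conjc_RtoC mulrCA Im_RtoCM Im0 mulr0.
Qed.

Context {n : nat} {b0 : R[i]} {pw : R[i] -> R[i]} {a : R -> R[i]}.
Hypothesis hb0 : b0 != 0.
Hypothesis hpw : forall z, pw z ^+ 2 = z ^+ n.
Hypothesis ha0 : forall t, a t != 0.

Lemma wstar_sqr_mulX (t : R) : wstar b0 pw a t ^+ 2 * a t ^+ n = b0 ^+ 2 * a 0 ^+ n.
Proof. by rewrite /wstar exprMn hpw expr_div_n -mulrA divfK // expf_neq0. Qed.

Lemma wstar_neq0 (t : R) : wstar b0 pw a t != 0.
Proof.
apply/eqP => w0; move/eqP: (wstar_sqr_mulX t); rewrite w0 expr0n mul0r eq_sym.
by rewrite mulf_eq0 !expf_eq0 (negbTE hb0) (negbTE (ha0 0)) !andbF.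
Qed.

Lemma wstar_cderive (t : R) : (0 < n)%N -> cderivable a t -> cderivable (wstar b0 pw a) t ->
  cderive (wstar b0 pw a) t = - (n%:R / 2) * wstar b0 pw a t * cderive a t / a t.
Proof.
move=> n0 da dw; set w := wstar b0 pw a.
have dconst := is_cderiveM (is_cderiveX 2 (cderivableP dw)) (is_cderiveX n (cderivableP da)).
have {}dconst : 2%:R * w t ^+ 1 * cderive w t * a t ^+ n
                + w t ^+ 2 * (n%:R * a t ^+ n.-1 * cderive a t) = 0.
  rewrite -(is_cderiveE dconst) (_ : (fun r => _) = fun=> b0 ^+ 2 * a 0 ^+ n).
    exact: is_cderiveE (is_cderive_cst _ t).
  by apply: funext => r; rewrite wstar_sqr_mulX.
have [An Wn] : a t != 0 /\ w t != 0 by split; [apply: ha0 | apply: wstar_neq0].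
apply: (@mulfI _ (2 * w t * a t ^+ n.-1 * a t)).
  have two : (2 : R[i]) != 0 by rewrite pnatr_eq0.
  by apply: mulf_neq0 => //; apply: mulf_neq0; [exact: mulf_neq0 | exact: expf_neq0].
rewrite [LHS](_ : _ = 2%:R * w t ^+ 1 * cderive w t * a t ^+ n); last first.
  by rewrite expr1 -[in RHS](prednK n0) exprSr; ring.
by move/eqP: dconst; rewrite addr_eq0 => /eqP ->; field.
Qed.

Lemma wstar_derive (theta : R) (t : R) : (0 < n)%N ->
  (forall r, a r = RtoC (cabs (a r)) * cexpi theta) ->
  cderivable a t -> cderivable (wstar b0 pw a) t ->
  is_cderive (wstar b0 pw a) t
    (RtoC (- (n%:R / 4) * derive1 (fun r => cabs2 (a r)) t / cabs2 (a t))
     * wstar b0 pw a t).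
Proof.
move=> n0 harg da dw; have An := ha0 t.
rewrite (_ : RtoC _ * _ = cderive (wstar b0 pw a) t); first exact: (cderivableP dw).
rewrite wstar_cderive //.
have phase := cderive_const_arg (cexpi_conj theta) harg da.
have -> : cderive a t
          = RtoC (derive1 (fun r => cabs2 (a r)) t / 2) / RtoC (cabs2 (a t)) * a t.
  by rewrite -phase -cabs2_conj; field; rewrite conjc_eq0 An.
rewrite !(RtoCM, RtoCN, RtoCV, RtoC_nat).
by field; rewrite An -cabs2_conj mulf_neq0 // conjc_eq0.
Qed.

End ScaleFunction.

Section PointwiseIdentities.
Context {R : realType}.

Lemma dx_conjM {n : nat} (G H : R -> 'rV[R]_n -> R[i]) j t x :
  cderivable (fun y => G t (x + y *: ej j)) 0 ->
  cderivable (fun y => H t (x + y *: ej j)) 0 ->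
  dx j (fun t x => conjc (G t x) * H t x) t x
  = conjc (dx j G t x) * H t x + conjc (G t x) * dx j H t x.
Proof.
move=> /cderivableP dG /cderivableP dH.
by rewrite /dx (is_cderiveE (is_cderiveM (is_cderive_conj dG) dH)) scale0r addr0.
Qed.

Lemma div_conj_grad {n : nat} (G u : R -> 'rV[R]_n -> R[i]) t x :
  (forall j, cderivable (fun y => G t (x + y *: ej j)) 0) ->
  (forall j, cderivable (fun y => dx j u t (x + y *: ej j)) 0) ->
  \sum_(j < n) dx j (fun t x => conjc (G t x) * dx j u t x) t x
  = \sum_(j < n) conjc (dx j G t x) * dx j u t x + conjc (G t x) * lap u t x.
Proof.
move=> dG ddu; under eq_bigr do rewrite dx_conjM //.
by rewrite big_split /= -mulr_sumr.
Qed.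

Lemma charge_identity {s c a : R} (G : R) {Q U Ut L W V : R[i]} :
  W != 0 -> complex.Im (conjc (U * W) * V) = 0 ->
  RtoC s * iC * RtoC c * Ut + Q * (RtoC a * L - W^-1 * V) = 0 ->
  RtoC s * (RtoC c * RtoC (2 * complex.Re (conjc U * Ut)))
  + RtoC (2 * complex.Im (conjc Q))
    * (RtoC (a * G) + RtoC (cabs2 W)^-1 * (conjc (U * W) * V))
  = RtoC (complex.Re (RtoC 2 * iC * Q * RtoC a * (RtoC G + conjc U * L))).
Proof.
move=> W0 realK /(congr1 (fun z => complex.Im (conjc U * z))) E.
rewrite -cabs2_eq0 in W0; move: W0 realK E.
case: U Ut L V W Q => [u1 u2] [p1 p2] [l1 l2] [v1 v2] [w1 w2] [q1 q2].
rewrite /RtoC /iC /cabs2 /= => W0 realK E.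
apply/eqP; rewrite eq_complex /=; apply/andP; split; apply/eqP; last first.
  by rewrite realK; ring.
set N := (w1 ^+ 2 + w2 ^+ 2)^-1 in E *.
have {}realK : q1 * N * ((u1 * w1 - u2 * w2) * v2 - (u1 * w2 + u2 * w1) * v1) = 0.
  by move: realK; rewrite mulNr => ->; rewrite mulr0.
move: E; rewrite !mulr0 !addr0 => E.
lra.
Qed.

Lemma energy_identity {s c a : R} {Q Ut L W V : R[i]} :
  a != 0 -> Q * conjc Q = 1 ->
  RtoC s * iC * RtoC c * Ut + Q * (RtoC a^-1 * L - W^-1 * V) = 0 ->
  2 * complex.Re (conjc Ut * L)
  = 2 * a * complex.Re (conjc Ut * (W^-1 * V))
    + s * 2 * c * complex.Im (conjc Q) * a * cabs2 Ut.
Proof.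
move=> a0 hQ E.
have -> : L = RtoC a * (conjc Q * (Q * (RtoC a^-1 * L - W^-1 * V)) + W^-1 * V).
  by rewrite mulrA [conjc Q * Q]mulrC hQ mul1r subrK mulrA -RtoCM mulfV // mul1r.
move/eqP: E; rewrite addrC addr_eq0 => /eqP ->; move: (W^-1 * V) => Z.
clear hQ; case: Ut Z Q => [p1 p2] [z1 z2] [q1 q2]; rewrite /RtoC /iC /cabs2 /=; ring.
Qed.

End PointwiseIdentities.

Section Estimates.
Context {R : realType} {n : nat}.
Context {s : R} {C0 Q : R[i]} {A : R -> R} {w : R -> R[i]}.
Context {V0 : R[i] -> R} {V0' : R[i] -> R[i]} {u : R -> 'rV[R]_n -> R[i]}.
Hypothesis hC0 : complex.Im C0 = 0.
Hypothesis hw0 : forall t, w t != 0.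
Hypothesis hV0' : forall z, complex.Im (conjc z * V0' z) = 0.
Hypothesis hu_t : forall t x, cderivable (fun r => u r x) t.
Hypothesis hu_x : forall t x j, cderivable (fun y => u t (x + y *: ej j)) 0.
Hypothesis hu_xx : forall t x j, cderivable (fun y => dx j u t (x + y *: ej j)) 0.
Hypothesis heq : forall t x,
  RtoC s * iC * C0 * dt u t x
  + Q * (RtoC (A t)^-1 * lap u t x - (w t)^-1 * V0' (u t x * w t)) = 0.

Definition charge_density t x := C0 * RtoC (cabs2 (u t x)).

Definition charge_flux (j : 'I_n) t x := conjc (u t x) * dx j u t x.

Definition charge_dissipation t x :=
  RtoC (2 * complex.Im (conjc Q))
  * (RtoC ((A t)^-1 * \sum_(j < n) cabs2 (dx j u t x))
     + RtoC (cabs2 (w t))^-1 * (conjc (u t x * w t) * V0' (u t x * w t))).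

Lemma charge_balance t x :
  RtoC s * cderive (fun r => charge_density r x) t + charge_dissipation t x
  = RtoC (complex.Re (RtoC 2 * iC * Q * RtoC (A t)^-1
                      * \sum_(j < n) dx j (charge_flux j) t x)).
Proof.
have ddens := is_cderiveM (is_cderive_cst C0 t)
                (is_cderive_RtoC (is_derive_cabs2 (cderivableP (hu_t t x)))).
rewrite (is_cderiveE ddens) mul0r add0r /charge_flux div_conj_grad //.
have -> : \sum_(j < n) conjc (dx j u t x) * dx j u t x
          = RtoC (\sum_(j < n) cabs2 (dx j u t x)).
  by rewrite RtoC_sum; apply: eq_bigr => j _; rewrite mulrC cabs2_conj.
have E := heq t x; rewrite -(RtoC_Re hC0) in E *.
exact: charge_identity (hw0 t) (hV0' _) E.
Qed.

Lemma charge_estimate :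
  regular_decay charge_density charge_dissipation charge_flux ->
  forall t, RtoC s * cintRn (charge_density t)
            + cint0 (fun r => cintRn (charge_dissipation r)) t
            = RtoC s * cintRn (charge_density 0).
Proof.
move=> reg; apply: (balance_law (fun t => RtoC 2 * iC * Q * RtoC (A t)^-1) reg).
exact: charge_balance.
Qed.

Hypothesis hA0 : forall t, A t != 0.
Hypothesis hA : forall t, derivable A t 1.
Hypothesis hw : forall t,
  is_cderive w t (RtoC (- (n%:R / 4) * derive1 A t / A t) * w t).
Hypothesis hV0 : forall (psi : R -> R[i]) t, cderivable psi t ->
  derivable (fun r => V0 (psi r)) t 1 /\
  derive1 (fun r => V0 (psi r)) t = complex.Re (conjc (cderive psi t) * V0' (psi t)).

Definition potential_rate t x :=
  ((n + 2)%:R * derive1 A t * V0 (u t x * w t)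
   - n%:R / 2 * derive1 A t * complex.Re (conjc (u t x * w t) * V0' (u t x * w t)))
  / cabs2 (w t)
  + 2 * A t * complex.Re (conjc (dt u t x) * ((w t)^-1 * V0' (u t x * w t))).

(* By [hw], (|w|^2)' = -(n/2) (A'/A) |w|^2, whence the factor n + 2. *)
Lemma potential_derive (t : R) (x : 'rV[R]_n) :
  is_derive t 1 (fun r => 2 * A r / cabs2 (w r) * V0 (u r x * w r))
    (potential_rate t x).
Proof.
have W0 : cabs2 (w t) != 0 by rewrite cabs2_eq0.
have dinv := @is_deriveV R (fun r => cabs2 (w r)) t _ 1 W0 (is_derive_cabs2 (hw t)).
have dA := derivableP (hA t).
have dUW := is_cderiveM (cderivableP (hu_t t x)) (hw t).
have [/derivableP dV V0E] := hV0 _ _ (is_cderive_derivable dUW).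
apply: is_derive_eq; rewrite /potential_rate -!derive1E V0E (is_cderiveE dUW) -/(dt u t x).
move: W0 (hw0 t) (hA0 t).
move: (w t) (u t x) (dt u t x) (V0' (u t x * w t)) (V0 (u t x * w t)) (A t) (derive1 A t).
move=> [w1 w2] [u1 u2] [p1 p2] [v1 v2] V0v At a'.
rewrite /RtoC /cabs2 /GRing.scale /= natrD => W0 _ At0.
by field; rewrite W0 At0.
Qed.

Hypothesis hn : (0 < n)%N.
Hypothesis hQ : Q * conjc Q = 1.
Hypothesis hux_t : forall t x j, cderivable (fun r => dx j u r x) t.
Hypothesis hut_x : forall t x j, cderivable (fun y => dt u t (x + y *: ej j)) 0.
Hypothesis hcomm : forall t x j, dt (dx j u) t x = dx j (dt u) t x.

Definition energy_density t x :=
  RtoC (\sum_(j < n) cabs2 (dx j u t x))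
  + RtoC (2 * A t / cabs2 (w t)) * RtoC (V0 (u t x * w t)).

Definition energy_flux (j : 'I_n) t x := conjc (dt u t x) * dx j u t x.

Definition energy_dissipation t x :=
  RtoC (s * 2) * C0 * RtoC (complex.Im (conjc Q) * A t * cabs2 (dt u t x))
  + RtoC (n%:R / (2 * cabs2 (w t)) * derive1 A t)
    * (conjc (u t x * w t) * V0' (u t x * w t)
       - RtoC (2 * (n + 2)%:R / n%:R * V0 (u t x * w t))).

Lemma energy_density_derive (t : R) (x : 'rV[R]_n) :
  is_cderive (fun r => energy_density r x) t
    (RtoC (\sum_(j < n) 2 * complex.Re (conjc (dx j u t x) * dt (dx j u) t x)
           + potential_rate t x)).
Proof.
have dgrad : is_derive t 1 (fun r => \sum_(j < n) cabs2 (dx j u r x))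
    (\sum_(j < n) 2 * complex.Re (conjc (dx j u t x) * dt (dx j u) t x)).
  by rewrite -fct_sumE; apply: is_derive_sum => j; apply/is_derive_cabs2/cderivableP.
rewrite (_ : (fun r => energy_density r x) = fun r => RtoC (\sum_(j < n) cabs2 (dx j u r x)
    + 2 * A r / cabs2 (w r) * V0 (u r x * w r))); last first.
  by apply: funext => r; rewrite /energy_density RtoCD -RtoCM.
exact: is_cderive_RtoC (is_deriveD dgrad (potential_derive t x)).
Qed.

Lemma energy_balance (t : R) (x : 'rV[R]_n) :
  RtoC 1 * cderive (fun r => energy_density r x) t + energy_dissipation t x
  = RtoC (complex.Re (RtoC 2 * \sum_(j < n) dx j (energy_flux j) t x)).
Proof.
rewrite (is_cderiveE (energy_density_derive t x)) mul1r /potential_rate /energy_flux.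
rewrite div_conj_grad //.
have E := heq t x; rewrite -(RtoC_Re hC0) in E.
rewrite Re_RtoCM Re_add Re_sum mulrDr mulr_sumr (energy_identity (hA0 t) hQ E).
under eq_bigr do rewrite hcomm Re_conjMC.
have n0 : (n%:R : R) != 0 by rewrite pnatr_eq0 -lt0n.
rewrite /energy_dissipation -(RtoC_Re hC0); move: (\sum_i _) => S.
move: (hw0 t) (hV0' (u t x * w t)) (hA0 t).
move: (w t) (u t x) (dt u t x) (V0' (u t x * w t)) (V0 (u t x * w t)) (A t) (derive1 A t).
move: (complex.Re C0) (complex.Im (conjc Q)) => c q.
move=> [w1 w2] [u1 u2] [p1 p2] [v1 v2] V0v At a'.
rewrite -cabs2_eq0 /RtoC /cabs2 /= => W0 realK At0.
apply/eqP; rewrite eq_complex /=; apply/andP; split; apply/eqP.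
- by rewrite natrD; field; rewrite W0 n0.
- by rewrite subr0 realK; ring.
Qed.

Lemma energy_estimate :
  regular_decay energy_density energy_dissipation energy_flux ->
  forall t, cintRn (energy_density t)
            + cint0 (fun r => cintRn (energy_dissipation r)) t
            = cintRn (energy_density 0).
Proof.
move=> reg t; have := balance_law (fun=> RtoC 2) reg energy_balance t.
by rewrite !mul1r.
Qed.

End Estimates.

Theorem lemma6p2 (R : realType) (n : nat) (hn : (1 <= n)%N)
  (m hbar : R) (hhbar : hbar != 0)
  (om0 om1 : R)
  (hom0 : - (pi / 2) < om0 <= pi / 2) (hom1 : - (pi / 2) < om1 <= pi / 2)
  (a : R -> R[i]) (ha0 : forall t, a t != 0) (had : forall t, cderivable a t)
  (theta : R) (harg : forall t, a t = RtoC (cabs (a t)) * cexpi theta)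
  (b0 : R[i]) (hb0 : b0 != 0)
  (pw : R[i] -> R[i]) (hpw : forall z, pw z ^+ 2 = z ^+ n)
  (hC0 : complex.Im (C0of m hbar om0) = 0)
  (V0 : R[i] -> R) (V0' : R[i] -> R[i])
  (hV0' : forall z, complex.Im (conjc z * V0' z) = 0)
  (s : R) (hs : s = 1 \/ s = -1)
  (u : R -> 'rV[R]_n -> R[i])
  (hu_t : forall t x, cderivable (fun r => u r x) t)
  (hu_x : forall t x j, cderivable (fun y => u t (x + y *: ej j)) 0)
  (hu_xx : forall t x j, cderivable (fun y => dx j u t (x + y *: ej j)) 0)
  (heq : forall t x,
     RtoC s * iC * C0of m hbar om0 * dt u t x
     + (cexpi (2 * om0) / cexpi (2 * (theta + om1)))
       * (RtoC (cabs2 (a t))^-1 * lap u t x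
          - (wstar b0 pw a t)^-1 * V0' (u t x * wstar b0 pw a t)) = 0) :
  (* (1) charge estimate *)
  (let eC0 := fun t x => C0of m hbar om0 * RtoC (cabs2 (u t x)) in
   let eC1 := fun t x =>
     RtoC (2 * complex.Im (phase_ratio theta om0 om1))
     * (RtoC ((cabs2 (a t))^-1 * \sum_(j < n) cabs2 (dx j u t x))
        + RtoC (cabs2 (wstar b0 pw a t))^-1
          * (conjc (u t x * wstar b0 pw a t) * V0' (u t x * wstar b0 pw a t))) in
   regular_decay eC0 eC1 (fun j t x => conjc (u t x) * dx j u t x) ->
   forall t,
     RtoC s * cintRn (eC0 t) + cint0 (fun r => cintRn (eC1 r)) t
     = RtoC s * cintRn (eC0 0))
  /\
  (* (2) energy estimate *)
  (let eE0 := fun t x =>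
     RtoC (\sum_(j < n) cabs2 (dx j u t x))
     + RtoC (2 * cabs2 (a t) / cabs2 (wstar b0 pw a t))
       * RtoC (V0 (u t x * wstar b0 pw a t)) in
   let eE1 := fun t x =>
     RtoC (s * 2) * C0of m hbar om0
       * RtoC (complex.Im (phase_ratio theta om0 om1) * cabs2 (a t) * cabs2 (dt u t x))
     + RtoC (n%:R / (2 * cabs2 (wstar b0 pw a t))
             * derive1 (fun r => cabs2 (a r)) t)
       * (conjc (u t x * wstar b0 pw a t) * V0' (u t x * wstar b0 pw a t)
          - RtoC (2 * (n + 2)%:R / n%:R * V0 (u t x * wstar b0 pw a t))) in
   (forall (psi : R -> R[i]) (t : R), cderivable psi t ->
      derivable (fun r => V0 (psi r)) t 1 /\
      derive1 (fun r => V0 (psi r)) t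
        = complex.Re (conjc (cderive psi t) * V0' (psi t))) ->
   (forall t, cderivable (wstar b0 pw a) t) ->
   (forall t x j, cderivable (fun r => dx j u r x) t) ->
   (forall t x j, cderivable (fun y => dt u t (x + y *: ej j)) 0) ->
   (forall t x j, dt (dx j u) t x = dx j (dt u) t x) ->
   regular_decay eE0 eE1 (fun j t x => conjc (dt u t x) * dx j u t x) ->
   forall t,
     cintRn (eE0 t) + cint0 (fun r => cintRn (eE1 r)) t = cintRn (eE0 0)).
Proof.
have w0 := wstar_neq0 hb0 hpw ha0.
set Q := cexpi (2 * om0) / cexpi (2 * (theta + om1)) in heq *.
have -> : phase_ratio theta om0 om1 = conjc Q.
  by rewrite /phase_ratio /Q conjcM conjc_inv -!cexpiV invrK mulrC.
have hQ : Q * conjc Q = 1.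
  by rewrite /Q conjcM conjc_inv -!cexpiV invrK mulrACA mulfV ?mulVf ?mulr1 ?cexpi_neq0.
split.
- by move=> eC0 eC1; apply: (charge_estimate hC0 w0 hV0' hu_t hu_x hu_xx heq).
- move=> eE0 eE1 hV0 hw hux_t hut_x hcomm.
  have hA0 t : cabs2 (a t) != 0 by rewrite cabs2_eq0.
  have hA t : derivable (fun r => cabs2 (a r)) t 1.
    by case: (is_derive_cabs2 (cderivableP (had t))).
  have hw' t := wstar_derive hb0 hpw ha0 theta t hn harg (had t) (hw t).
  exact: (energy_estimate hC0 w0 hV0' hu_t hu_xx heq hA0 hA hw' hV0 hn hQ hux_t hut_x hcomm).
Qed.
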